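(* Let $k$ be a commutative ring, $A$ a commutative $k$-algebra, $m\ge1$ an integer or $m=\infty$, and $D\in\operatorname{HS}_k(A;m)$. Then $\binom{r+s}{r}D_{r+s}-D_r\circ D_s\in\operatorname{Diff}^{(r+s-1)}_{A/k}$ whenever $r+s\le m$; consequently the total symbol $\Sigma_m(D)$ is of exponential type in $(\operatorname{gr}\operatorname{Diff}_{A/k})[[t]]/(t^{m+1})$. Moreover $\Sigma_m(a\bullet D)=a\Sigma_m(D)$ for every $a\in A$.
   Context: $\operatorname{HS}_k(A;m)$: sequences $D=(D_0,\dots,D_m)$ of $k$-linear maps $A\to A$ with $D_0=\mathrm{Id}$, $D_i(xy)=\sum_{r+s=i}D_r(x)D_s(y)$. Each $D_i$ is a $k$-linear differential operator of order $\le i$. $\operatorname{Diff}^{(i)}_{A/k}$ denotes $k$-linear differential operators of order $\le i$ (defined inductively: order $0$ = multiplications by elements of $A$; $\varphi$ has order $\le i+1$ iff $[\varphi,a]=\varphi\circ a-a\circ\varphi$ has order $\le i$ for all $a$), $\operatorname{Diff}^{(-1)}=0$, $\sigma_i$ the symbol map to $\operatorname{gr}^i\operatorname{Diff}_{A/k}$. Total symbol: $\Sigma_m(D)=\sum_{i=0}^m\sigma_i(D_i)t^i\in(\operatorname{gr}\operatorname{Diff}_{A/k})[[t]]/(t^{m+1})$. An element $\sum_{i=0}^mR_it^i$ of $B[[t]]/(t^{m+1})$ is of exponential type if $R_0=1$ and $\binom{i+j}{i}R_{i+j}=R_iR_j$ whenever $i+j\le m$. For $a\in A$, $a\bullet D$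 is the Hasse–Schmidt derivation with $(a\bullet D)_0=\mathrm{Id}$ and $(a\bullet D)_r=a^rD_r$; for an exponential type element, $a\cdot\sum R_it^i=\sum a^iR_it^i$. *)

From HB Require Import structures.
From mathcomp Require Import all_boot all_order all_algebra.
Set Implicit Arguments. Unset Strict Implicit. Unset Printing Implicit Defensive.
Import GRing.Theory.
Local Open Scope ring_scope.

(* m : option nat, with None standing for m = infinity. *)
Definition le_m (m : option nat) (i : nat) : bool :=
  if m is Some n then (i <= n)%N else true.

Section Diff.
Variables (k : comPzRingType) (A : comAlgType k).

Definition klinear (phi : A -> A) : Prop :=
  forall (c : k) (x y : A), phi (c *: x + y) = c *: phi x + phi y.

Fixpoint diffop (i : nat) (phi : A -> A) : Prop :=
  match i with
  | 0 => klinear phi /\ exists b : A, forall x, phi x = b * x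
  | i'.+1 => klinear phi /\
             forall a : A, diffop i' (fun x => phi (a * x) - a * phi x)
  end.

(* Diff^{(j-1)}_{A/k}, with Diff^{(-1)} = 0 *)
Definition diffop_pred (j : nat) (phi : A -> A) : Prop :=
  if j is j'.+1 then diffop j' phi else forall x, phi x = 0.

Definition is_HS (m : option nat) (D : nat -> A -> A) : Prop :=
  (forall x, D 0%N x = x) /\
  (forall i, le_m m i -> klinear (D i)) /\
  (forall i, le_m m i -> forall x y : A,
      D i (x * y) = \sum_(r < i.+1) D r x * D (i - r)%N y).

(* Elements of gr^i Diff_{A/k} are represented by operators P in Diff^{(i)};
   sigma_i(P) = sigma_i(Q) in gr^i iff P - Q lies in Diff^{(i-1)}. *)
Definition gr_eq (i : nat) (P Q : A -> A) : Prop :=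
  diffop i P /\ diffop i Q /\ diffop_pred i (fun x => P x - Q x).

(* An element sum_{i<=m} R_i t^i of (gr Diff)[[t]]/(t^{m+1}) is given by a
   family of representatives R i in Diff^{(i)} (so its i-th coefficient is
   sigma_i(R i)).  The product sigma_i(P) sigma_j(Q) in gr is sigma_{i+j}(P o Q);
   the unit is sigma_0(Id). *)
Definition exp_type (m : option nat) (R : nat -> A -> A) : Prop :=
  (forall i, le_m m i -> diffop i (R i)) /\
  gr_eq 0 (R 0%N) id /\
  (forall i j, le_m m (i + j) ->
     gr_eq (i + j) (fun x => R (i + j)%N x *+ 'C(i + j, i)) (fun x => R i (R j x))).

Definition total_symbol (D : nat -> A -> A) : nat -> A -> A := D.

Definition hs_act (a : A) (D : nat -> A -> A) : nat -> A -> A :=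
  fun r => if r is 0%N then id else fun x => a ^+ r * D r x.

(* a . sum R_i t^i = sum a^i R_i t^i, where a^i acts on gr^i by left
   multiplication (the A-module structure sigma_0(a^i) sigma_i(P)). *)
Definition sym_act (a : A) (R : nat -> A -> A) : nat -> A -> A :=
  fun i x => a ^+ i * R i x.

End Diff.

(* The Leibniz rule for D gives the commutator formula
     [D_{i+1}, a] = sum_{j <= i} D_{j+1}(a) D_{i-j},
   from which, by induction on i, D_i is a differential operator of order
   <= i, and moreover [D_{i+1}, a] = D_1(a) D_i modulo Diff^{(i-1)}.
   Combining this with the Leibniz rule for commutators of compositions and
   Pascal's rule, induction on r + s shows that
     binom(r+s, r) D_{r+s} - D_r o D_s  lies in Diff^{(r+s-1)},
   i.e. the total symbol is of exponential type. *)
From HB Require Import structures.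
From mathcomp Require Import all_boot all_order all_algebra.
From mathcomp Require Import ring.
Import GRing.Theory.
Local Open Scope ring_scope.

Set Implicit Arguments. Unset Strict Implicit.

Section DifferentialOperators.
Variables (k : comPzRingType) (A : comAlgType k).
Implicit Types f g h : A -> A.

Definition bracket f (a : A) : A -> A := fun x => f (a * x) - a * f x.

Lemma klinearD f x y : klinear f -> f (x + y) = f x + f y.
Proof. by move=> Hf; have := Hf 1 x y; rewrite !scale1r. Qed.

Lemma klinear0 f : klinear f -> f 0 = 0.
Proof. by move=> Hf; apply: (addrI (f 0)); rewrite addr0 -klinearD // addr0. Qed.

Lemma klinearB f x y : klinear f -> f (x - y) = f x - f y.
Proof.
move=> Hf; have fN : f (- y) = - f y.
  by have := Hf (-1) y 0; rewrite !scaleN1r addr0 klinear0 // addr0.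
by rewrite klinearD // fN.
Qed.

Lemma klinear_ext f g : (forall x, f x = g x) -> klinear f -> klinear g.
Proof. by move=> E Hf c x y; rewrite -!E Hf. Qed.

Lemma klinear_zero : klinear (fun _ : A => 0).
Proof. by move=> c x y; rewrite scaler0 addr0. Qed.

Lemma klinear_add f g : klinear f -> klinear g -> klinear (fun x => f x + g x).
Proof. by move=> Hf Hg c x y; rewrite Hf Hg scalerDr addrACA. Qed.

Lemma klinear_opp f : klinear f -> klinear (fun x => - f x).
Proof. by move=> Hf c x y; rewrite Hf opprD scalerN. Qed.

Lemma klinear_lmul b f : klinear f -> klinear (fun x => b * f x).
Proof. by move=> Hf c x y; rewrite Hf mulrDr scalerAr. Qed.

Lemma klinear_rmul b f : klinear f -> klinear (fun x => f (b * x)).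
Proof. by move=> Hf c x y; rewrite mulrDr -scalerAr Hf. Qed.

Lemma klinear_comp f g : klinear f -> klinear g -> klinear (fun x => f (g x)).
Proof. by move=> Hf Hg c x y; rewrite Hg Hf. Qed.

Lemma bracket_comp f g a x : klinear f ->
  bracket (fun y => f (g y)) a x = f (bracket g a x) + bracket f a (g x).
Proof. by move=> Hf; rewrite /bracket (klinearB _ _ Hf) addrA subrK. Qed.

Lemma diffop_klinear i f : diffop i f -> klinear f.
Proof. by case: i => [[]|i []]. Qed.

Lemma diffop_ext i f g : (forall x, f x = g x) -> diffop i f -> diffop i g.
Proof.
elim: i f g => [|i IH] f g E [Hf H]; split; try exact: klinear_ext Hf.
  by case: H => b Hb; exists b => x; rewrite -E.
by move=> a; apply: (IH _ _ _ (H a)) => x; rewrite !E.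
Qed.

Lemma diffop_zero i : diffop i (fun _ : A => 0).
Proof.
elim: i => [|i IH]; split; try exact: klinear_zero.
  by exists 0 => x; rewrite mul0r.
by move=> a; apply: (diffop_ext _ IH) => x; rewrite mulr0 subrr.
Qed.

Lemma diffop_add i f g : diffop i f -> diffop i g -> diffop i (fun x => f x + g x).
Proof.
elim: i f g => [|i IH] f g [Hf H1] [Hg H2]; split; try exact: klinear_add.
  by case: H1 => b1 E1; case: H2 => b2 E2; exists (b1 + b2) => x; rewrite E1 E2 mulrDl.
move=> a; apply: (diffop_ext _ (IH _ _ (H1 a) (H2 a))) => x.
by rewrite mulrDr opprD addrACA.
Qed.

Lemma diffop_opp i f : diffop i f -> diffop i (fun x => - f x).
Proof.
elim: i f => [|i IH] f [Hf H1]; split; try exact: klinear_opp.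
  by case: H1 => b1 E1; exists (- b1) => x; rewrite E1 mulNr.
move=> a; apply: (diffop_ext _ (IH _ (H1 a))) => x.
by rewrite mulrN opprB opprK addrC.
Qed.

Lemma diffop_natmul i f n : diffop i f -> diffop i (fun x => f x *+ n).
Proof.
move=> Hf; elim: n => [|n IH]; first exact: diffop_ext (diffop_zero i).
by apply: (diffop_ext _ (diffop_add Hf IH)) => x; rewrite mulrS.
Qed.

Lemma diffop_sum i (F : nat -> A -> A) n :
  (forall j, (j < n)%N -> diffop i (F j)) -> diffop i (fun x => \sum_(j < n) F j x).
Proof.
elim: n => [|n IH] HF.
  by apply: (diffop_ext _ (diffop_zero i)) => x; rewrite big_ord0.
apply: (diffop_ext (f := fun x => \sum_(j < n) F j x + F n x)).
  by move=> x; rewrite big_ord_recr.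
by apply: diffop_add; [apply: IH => j /ltnW; apply: HF | apply: HF].
Qed.

Lemma diffop_lmul i b f : diffop i f -> diffop i (fun x => b * f x).
Proof.
elim: i f => [|i IH] f [Hf H1]; split; try exact: klinear_lmul.
  by case: H1 => b1 E1; exists (b * b1) => x; rewrite E1 mulrA.
by move=> a; apply: (diffop_ext _ (IH _ (H1 a))) => x; rewrite mulrBr mulrCA.
Qed.

Lemma diffop_rmul i b f : diffop i f -> diffop i (fun x => f (b * x)).
Proof.
elim: i f => [|i IH] f [Hf H1]; split; try exact: klinear_rmul.
  by case: H1 => b1 E1; exists (b1 * b) => x; rewrite E1 mulrA.
by move=> a; apply: (diffop_ext _ (IH _ (H1 a))) => x; rewrite mulrCA.
Qed.

Lemma diffop_succ i f : diffop i f -> diffop i.+1 f.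
Proof.
elim: i f => [|i IH] f [Hf H1]; split=> // a; last exact/IH/H1.
case: H1 => b E.
by apply: (diffop_ext _ (diffop_zero 0)) => x; rewrite !E mulrCA subrr.
Qed.

Lemma diffop_le i j f : (i <= j)%N -> diffop i f -> diffop j f.
Proof.
elim: j => [|j IH]; first by rewrite leqn0 => /eqP ->.
rewrite leq_eqVlt => /orP [/eqP -> //|]; rewrite ltnS => H Hf.
exact/diffop_succ/IH.
Qed.

(* Orders add under composition; proved by induction on the total order
   using the Leibniz rule for commutators. *)
Lemma diffop_comp n i j f g : (i + j)%N = n -> diffop i f -> diffop j g ->
  diffop n (fun x => f (g x)).
Proof.
elim: n i j f g => [|n IH] [|i] [|j] f g // Hij.
- move=> [Hf [b1 E1]] [Hg [b2 E2]]; split; first exact: klinear_comp.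
  by exists (b1 * b2) => x; rewrite E1 E2 mulrA.
- move=> [_ [b1 E1]] Hg; rewrite -Hij.
  by apply: (diffop_ext _ (diffop_lmul b1 Hg)) => x; rewrite E1.
- move=> Hf [_ [b2 E2]]; rewrite addn0 in Hij; rewrite -Hij.
  by apply: (diffop_ext _ (diffop_rmul b2 Hf)) => x; rewrite E2.
move: Hij; rewrite addSn addnS => -[Hij] Hf Hg.
split; first exact: klinear_comp (diffop_klinear Hf) (diffop_klinear Hg).
move=> a; have [_ Hfa] := Hf; have [_ Hga] := Hg.
have H1 : diffop n (fun x => f (bracket g a x)).
  by apply: (IH i.+1 j _ _ _ Hf (Hga a)); rewrite addSn.
have H2 : diffop n (fun x => bracket f a (g x)).
  by apply: (IH i j.+1 _ _ _ (Hfa a) Hg); rewrite addnS.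
apply: (diffop_ext _ (diffop_add H1 H2)) => x.
by symmetry; apply: bracket_comp; apply: diffop_klinear Hf.
Qed.

Lemma diffop_pred_zero j f : (forall x, f x = 0) -> diffop_pred j f.
Proof. by case: j => [//|j] E; apply: (diffop_ext _ (diffop_zero j)). Qed.

Lemma diffop_pred_ext j f g : (forall x, f x = g x) -> diffop_pred j f -> diffop_pred j g.
Proof. by case: j => [|j] E /=; [move=> H x; rewrite -E | exact: diffop_ext]. Qed.

Lemma diffop_pred_add j f g :
  diffop_pred j f -> diffop_pred j g -> diffop_pred j (fun x => f x + g x).
Proof. by case: j => [|j] /=; [move=> H1 H2 x; rewrite H1 H2 addr0 | exact: diffop_add]. Qed.

Lemma diffop_pred_opp j f : diffop_pred j f -> diffop_pred j (fun x => - f x).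
Proof. by case: j => [|j] /=; [move=> H x; rewrite H oppr0 | exact: diffop_opp]. Qed.

Lemma diffop_pred_lmul j b f : diffop_pred j f -> diffop_pred j (fun x => b * f x).
Proof. by case: j => [|j] /=; [move=> H x; rewrite H mulr0 | exact: diffop_lmul]. Qed.

Lemma diffop_pred_natmul j n f : diffop_pred j f -> diffop_pred j (fun x => f x *+ n).
Proof. by case: j => [|j] /=; [move=> H x; rewrite H mul0rn | exact: diffop_natmul]. Qed.

Lemma diffop_pred_compl i j h f :
  diffop i h -> diffop_pred j f -> diffop_pred (i + j) (fun x => h (f x)).
Proof.
case: j => [|j] Hh Hf; last by rewrite addnS /=; apply: diffop_comp Hh Hf.
by apply: diffop_pred_zero => x; rewrite Hf (klinear0 (diffop_klinear Hh)).
Qed.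

Lemma diffop_pred_compr i j h f :
  diffop_pred j f -> diffop i h -> diffop_pred (j + i) (fun x => f (h x)).
Proof.
case: j => [|j] Hf Hh; last by rewrite addSn /=; apply: diffop_comp Hf Hh.
by apply: diffop_pred_zero => x; rewrite Hf.
Qed.

Definition eqm j f g := diffop_pred j (fun x => f x - g x).

Lemma eqm_sym j f g : eqm j f g -> eqm j g f.
Proof. by move=> H; apply: (diffop_pred_ext _ (diffop_pred_opp H)) => x; rewrite opprB. Qed.

Lemma eqm_trans j f g h : eqm j f g -> eqm j g h -> eqm j f h.
Proof.
move=> H1 H2; apply: (diffop_pred_ext _ (diffop_pred_add H1 H2)) => x.
by rewrite addrA subrK.
Qed.

Lemma eqm_add j f1 f2 g1 g2 : eqm j f1 g1 -> eqm j f2 g2 ->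
  eqm j (fun x => f1 x + f2 x) (fun x => g1 x + g2 x).
Proof.
move=> H1 H2; apply: (diffop_pred_ext _ (diffop_pred_add H1 H2)) => x.
by rewrite opprD addrACA.
Qed.

Lemma eqm_sub j f1 f2 g1 g2 : eqm j f1 g1 -> eqm j f2 g2 ->
  eqm j (fun x => f1 x - f2 x) (fun x => g1 x - g2 x).
Proof.
move=> H1 /diffop_pred_opp H2.
by apply: (diffop_pred_ext _ (diffop_pred_add H1 H2)) => x; ring.
Qed.

Lemma eqm_lmul j b f g : eqm j f g -> eqm j (fun x => b * f x) (fun x => b * g x).
Proof. by move=> H; apply: (diffop_pred_ext _ (diffop_pred_lmul b H)) => x; rewrite mulrBr. Qed.

Lemma eqm_natmul j n f g : eqm j f g -> eqm j (fun x => f x *+ n) (fun x => g x *+ n).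
Proof. by move=> H; apply: (diffop_pred_ext _ (diffop_pred_natmul n H)) => x; rewrite mulrnBl. Qed.

End DifferentialOperators.

Lemma le_m_le (m : option nat) i j : (i <= j)%N -> le_m m j -> le_m m i.
Proof. by case: m => //= n H1 H2; apply: leq_trans H1 H2. Qed.

Section HasseSchmidt.
Variables (k : comPzRingType) (A : comAlgType k) (m : option nat) (D : nat -> A -> A).
Hypothesis hD : is_HS m D.

Lemma hs_id x : D 0 x = x. Proof. by case: hD. Qed.

Lemma hs_klinear i : le_m m i -> klinear (D i).
Proof. by case: hD => _ [H _]; apply: H. Qed.

Lemma hs_leibniz i : le_m m i ->
  forall x y, D i (x * y) = \sum_(r < i.+1) D r x * D (i - r)%N y.
Proof. by case: hD => _ [_ H]; apply: H. Qed.

Lemma bracket_hs i a x : le_m m i.+1 ->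
  bracket (D i.+1) a x = \sum_(j < i.+1) D j.+1 a * D (i - j)%N x.
Proof.
move=> Hi; rewrite /bracket hs_leibniz // big_ord_recl /= hs_id subn0 addrAC subrr add0r.
by apply: eq_bigr => j _; rewrite /bump /= add1n subSS.
Qed.

Lemma hs_order i : le_m m i -> diffop i (D i).
Proof.
elim/ltn_ind: i => -[|i] IH Hi.
  by split; [exact: hs_klinear | exists 1 => x; rewrite hs_id mul1r].
split=> [|a]; first exact: hs_klinear.
apply: (diffop_ext (fun x => esym (bracket_hs a x Hi))).
apply: (diffop_sum (F := fun j x => D j.+1 a * D (i - j)%N x)) => j _.
apply/diffop_lmul/(diffop_le (leq_subr j i))/IH; first by rewrite ltnS leq_subr.
by apply: le_m_le Hi; rewrite (leq_trans (leq_subr _ _)).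
Qed.

Lemma bracket_hs_leading i a : le_m m i.+1 ->
  eqm i (bracket (D i.+1) a) (fun x => D 1 a * D i x).
Proof.
move=> Hi; have E x : \sum_(j < i) D j.+2 a * D (i - j.+1)%N x =
    bracket (D i.+1) a x - D 1 a * D i x.
  rewrite bracket_hs // big_ord_recl /= subn0 addrAC subrr add0r.
  by apply: eq_bigr => j _; rewrite /bump /= add1n.
apply: (diffop_pred_ext E); case: i Hi {E} => [|i] Hi /=.
  by move=> x; rewrite big_ord0.
apply: (diffop_sum (F := fun j x => D j.+2 a * D (i.+1 - j.+1)%N x)) => j _.
rewrite subSS; apply/diffop_lmul/(diffop_le (leq_subr j i))/hs_order.
by apply: le_m_le Hi; rewrite (leq_trans (leq_subr j i)) // -addn2 leq_addr.
Qed.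

Lemma bracket_hs_comp r s a : le_m m (r + s).+2 ->
  eqm (r + s).+1 (bracket (fun x => D r.+1 (D s.+1 x)) a)
      (fun x => D 1 a * (D r (D s.+1 x) + D r.+1 (D s x))).
Proof.
move=> Hm; set b := D 1 a.
have Hr : le_m m r.+1 by apply: le_m_le Hm; rewrite -addnS -addSn leq_addr.
have Hs : le_m m s.+1 by apply: le_m_le Hm; rewrite -addSn -addnS leq_addl.
have inner : eqm (r + s).+1 (fun x => D r.+1 (bracket (D s.+1) a x))
                           (fun x => D r.+1 (b * D s x)).
  have := diffop_pred_compl (hs_order Hr) (bracket_hs_leading a Hs).
  rewrite addSn; apply: diffop_pred_ext => x; by rewrite (klinearB _ _ (hs_klinear Hr)).
have swap : eqm (r + s).+1 (fun x => D r.+1 (b * D s x)) (fun x => b * D r.+1 (D s x)).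
  have [_ Hrb] := hs_order Hr.
  exact: diffop_comp (erefl _) (Hrb b) (hs_order (le_m_le (leqnSn s) Hs)).
have outer : eqm (r + s).+1 (fun x => bracket (D r.+1) a (D s.+1 x))
                           (fun x => b * D r (D s.+1 x)).
  by have := diffop_pred_compr (bracket_hs_leading a Hr) (hs_order Hs); rewrite addnS.
have := eqm_add (eqm_trans inner swap) outer.
apply: diffop_pred_ext => x.
have klr := hs_klinear Hr.
by rewrite (bracket_comp (D s.+1)) // mulrDr [b * D r.+1 _ + _]addrC.
Qed.

Lemma hs_binomial n r s : (r + s)%N = n -> le_m m n ->
  diffop_pred n (fun x => D n x *+ 'C(n, r) - D r (D s x)).
Proof.
elim: n r s => [|n IH] [|r] [|s] // Hrs Hm.
- by move=> x; rewrite !hs_id subrr.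
- by apply: diffop_pred_zero => x; rewrite bin0 hs_id -Hrs subrr.
- by apply: diffop_pred_zero => x; rewrite addn0 in Hrs; rewrite -Hrs binn hs_id subrr.
move: Hrs; rewrite addSn addnS => -[Hn]; subst n; set N := (r + s).+1.
have HN : le_m m N by apply: le_m_le Hm.
have Hr : le_m m r.+1 by apply: le_m_le Hm; rewrite -addnS -addSn leq_addr.
have Hs : le_m m s.+1 by apply: le_m_le Hm; rewrite -addSn -addnS leq_addl.
split=> [|a].
  apply/diffop_klinear/(diffop_add (i := N.+1)).
    exact/diffop_natmul/hs_order.
  by apply/diffop_opp/(diffop_comp (addnS r.+1 s : (r.+1 + s.+1)%N = N.+1));
    apply: hs_order.
set b := D 1 a; change (diffop_pred N (bracket (fun x =>
  D N.+1 x *+ 'C(N.+1, r.+1) - D r.+1 (D s.+1 x)) a)).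
have lead := eqm_natmul 'C(N.+1, r.+1) (bracket_hs_leading a Hm).
have comp : eqm N (bracket (fun x => D r.+1 (D s.+1 x)) a)
                  (fun x => b * (D N x *+ 'C(N, r) + D N x *+ 'C(N, r.+1))).
  apply: eqm_trans (bracket_hs_comp a Hm) (eqm_lmul b (eqm_add _ _)); apply: eqm_sym.
    exact: IH r s.+1 (addnS _ _) HN.
  exact: IH r.+1 s (addSn _ _) HN.
(* Pascal's rule binom(N+1, r+1) = binom(N, r) + binom(N, r+1) cancels the leading terms. *)
have pascal x : b * D N x *+ 'C(N.+1, r.+1) -
                b * (D N x *+ 'C(N, r) + D N x *+ 'C(N, r.+1)) = 0.
  by rewrite binS mulrnDr -!mulrnAr; ring.
apply: diffop_pred_ext (eqm_sub lead comp) => x.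
by rewrite pascal subr0 /bracket; ring.
Qed.

Lemma hs_symbol_exp_type : exp_type m (total_symbol D).
Proof.
split; first exact: hs_order.
split.
  split; first by apply: hs_order; case: (m).
  split; first by split=> //; exists 1 => x; rewrite mul1r.
  by move=> x; rewrite /total_symbol hs_id subrr.
move=> i j Hij; split; last split.
- exact/diffop_natmul/hs_order.
- by apply: diffop_comp (erefl _) _ _; apply/hs_order/(le_m_le _ Hij);
    [exact: leq_addr | exact: leq_addl].
- exact: hs_binomial.
Qed.

Lemma hs_actE a r x : hs_act a D r x = a ^+ r * D r x.
Proof. by case: r => [|r] //=; rewrite expr0 mul1r hs_id. Qed.

(* a . D is again a Hasse-Schmidt derivation: the weights a^r and a^(i-r)
   of the two factors in the Leibniz rule multiply to a^i. *)
Lemma hs_act_is_HS a : is_HS m (hs_act a D).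
Proof.
split=> //; split=> [[|i] Hi //|i Hi x y].
  exact/klinear_lmul/hs_klinear.
rewrite hs_actE hs_leibniz // mulr_sumr; apply: eq_bigr => r _.
by rewrite !hs_actE mulrACA -exprD subnKC // -ltnS.
Qed.

Lemma hs_act_symbol a i : le_m m i ->
  gr_eq i (total_symbol (hs_act a D) i) (sym_act a (total_symbol D) i).
Proof.
move=> Hi; have Ha : diffop i (fun x => a ^+ i * D i x) by exact/diffop_lmul/hs_order.
split; last split; last by apply: diffop_pred_zero => x; rewrite /total_symbol hs_actE subrr.
- by apply: (diffop_ext _ Ha) => x; rewrite /total_symbol hs_actE.
- exact: Ha.
Qed.

End HasseSchmidt.

Theorem mainTheorem7 (k : comPzRingType) (A : comAlgType k) (m : option nat)
    (hm : if m is Some n then (1 <= n)%N else true)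
    (D : nat -> A -> A) (hD : is_HS m D) :
  (forall r s : nat, le_m m (r + s) ->
     diffop_pred (r + s) (fun x => D (r + s)%N x *+ 'C(r + s, r) - D r (D s x)))
  /\ exp_type m (total_symbol D)
  /\ (forall a : A, is_HS m (hs_act a D) /\
        forall i, le_m m i ->
          gr_eq i (total_symbol (hs_act a D) i) (sym_act a (total_symbol D) i)).
Proof.
split; first by move=> r s; apply: (hs_binomial hD (erefl _)).
split; first exact: hs_symbol_exp_type hD.
by move=> a; split; [exact: (hs_act_is_HS hD a) | exact: (hs_act_symbol hD a)].
Qed.
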